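(* Let $G$ be a simple graph, $x\ne y$ vertices of $G$, and let $G'$ be obtained from $G$ by the $\diamondsuit_{xy}$-operation. Then $h_0(G)\ge h_0(G')$ and $h_1(G)\ge h_1(G')$.
   Context: All graphs are finite, undirected, without loops; $N(v)$ is the neighbourhood of $v$. The $\diamondsuit_{xy}$-operation: with $X=N(x)\setminus(N(y)\cup\{y\})$, $G'=(G-\{xv:v\in X\})\cup\{yv:v\in X\}$ on the same vertex set. $h_0(G)$ and $h_1(G)$ denote the numbers of Hamiltonian cycles and of Hamiltonian paths (as subgraphs) of $G$, respectively. *)

From mathcomp Require Import all_boot.
Set Implicit Arguments. Unset Strict Implicit. Unset Printing Implicit Defensive.

(* A simple graph on a finite vertex type T is a relation e : rel T that is
   symmetric and irreflexive (these are hypotheses of the theorem). *)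

Definition nbhd (T : finType) (e : rel T) (v : T) : {set T} := [set w | e v w].

Definition diamX (T : finType) (e : rel T) (x y : T) : {set T} :=
  nbhd e x :\: (y |: nbhd e y).

(* G' = (G - {xv : v in X}) ∪ {yv : v in X}, same vertex set. *)
Definition diamond (T : finType) (e : rel T) (x y : T) : rel T :=
  fun u v =>
    (e u v && ~~ (((u == x) && (v \in diamX e x y)) || ((v == x) && (u \in diamX e x y))))
    || ((u == y) && (v \in diamX e x y)) || ((v == y) && (u \in diamX e x y)).

Fixpoint path_edges (T : finType) (s : seq T) : {set {set T}} :=
  match s with
  | u :: ((v :: _) as s') => [set u; v] |: path_edges s'
  | _ => set0
  end.

Definition cycle_edges (T : finType) (s : seq T) : {set {set T}} :=
  if s is u :: p then path_edges (u :: rcons p u) else set0.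

Definition epath (T : finType) (e : rel T) (s : seq T) : bool :=
  if s is u :: p then path e u p else true.

(* Hamiltonian paths as subgraphs: edge sets of spanning paths of G. *)
Definition ham_paths (T : finType) (e : rel T) : {set {set {set T}}} :=
  [set F | [exists t : #|T|.-tuple T,
             [&& uniq t, epath e t & F == path_edges t]]].

Definition ham_cycles (T : finType) (e : rel T) : {set {set {set T}}} :=
  [set F | [exists t : #|T|.-tuple T,
             [&& 2 < #|T|, uniq t, cycle e t & F == cycle_edges t]]].

Definition h0 (T : finType) (e : rel T) : nat := #|ham_cycles e|.
Definition h1 (T : finType) (e : rel T) : nat := #|ham_paths e|.

From mathcomp Require Import all_boot.
From Stdlib Require Import ClassicalEpsilon.
Set Implicit Arguments. Unset Strict Implicit. Unset Printing Implicit Defensive.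

(* Write X = N(x) \ N[y] (the vertices whose edge to x is moved to y) and
   Y = N(y) \ N[x].  We map every Hamiltonian subgraph F of G' injectively to a
   Hamiltonian subgraph K of G of the same kind:
   1. if y has no neighbour of X in F, then F is already a subgraph of G: K = F;
   2. if y has a neighbour in X but none in Y, exchange x and y;
   3. otherwise y has neighbours v in X and w in Y; reversing the segment that
      starts at v and runs towards x (or the segment from y to x) replaces yv
      by xv, and possibly xc by yc for a common neighbour c of x and y.
   The three cases are told apart by K (x has an X-neighbour in K only in cases
   2 and 3, y has a Y-neighbour only in case 3), and within each case F is
   recovered from K. *)

Ltac set_by_cases := apply/setP=> ?; rewrite !inE;
  repeat match goal with
  | |- context [?A \in ?B] => case: (A \in B)
  | |- context [?A == ?B] => case: (A == B)
  end.

Section EdgeSets.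
Variable T : finType.
Implicit Types (s P S Q : seq T) (a b c d u v z : T) (F : {set {set T}}).

Definition link s1 s2 : {set {set T}} :=
  match s1, s2 with
  | a :: s1', b :: _ => [set [set last a s1'; b]]
  | _, _ => set0
  end.

Definition edges_in (g : rel T) F := forall u v, [set u; v] \in F -> g u v.

Definition touches F z (S : {set T}) := [exists u in S, [set z; u] \in F].

Lemma touchesP F z (S : {set T}) :
  reflect (exists2 u, u \in S & [set z; u] \in F) (touches F z S).
Proof. exact: exists_inP. Qed.

Lemma set2C a b : [set a; b] = [set b; a] :> {set T}.
Proof. by apply/setP=> w; rewrite !inE orbC. Qed.

Lemma eq_set2 a b c d : [set a; b] = [set c; d] :> {set T} ->
  (a = c /\ b = d) \/ (a = d /\ b = c).
Proof.
move=> E.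
have : a \in [set c; d] by rewrite -E set21.
have : b \in [set c; d] by rewrite -E set22.
have : c \in [set a; b] by rewrite E set21.
have : d \in [set a; b] by rewrite E set22.
by do 4!case/set2P=> ?; subst; auto.
Qed.

Lemma path_edges_cons a s : path_edges (a :: s) = link [:: a] s :|: path_edges s.
Proof. by case: s => [|b s] //=; rewrite setU0. Qed.

Lemma path_edges_cat s1 s2 :
  path_edges (s1 ++ s2) = path_edges s1 :|: path_edges s2 :|: link s1 s2.
Proof.
elim: s1 => [|a s1 IH]; first by rewrite /= set0U setU0.
rewrite cat_cons path_edges_cons IH path_edges_cons.
case: s1 {IH} => [|b s1]; last by set_by_cases.
by case: s2 => [|c s2]; rewrite /= ?set0U ?setU0 // setUC.
Qed.

Lemma link_rcons s b c t : link (rcons s b) (c :: t) = [set [set b; c]].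
Proof. by case: s => [|d s] //=; rewrite last_rcons. Qed.

Lemma path_edges_rcons s a : path_edges (rcons s a) = path_edges s :|: link s [:: a].
Proof. by rewrite -cats1 path_edges_cat setU0. Qed.

Lemma path_edges_rev s : path_edges (rev s) = path_edges s.
Proof.
elim: s => [|a s IH] //.
rewrite rev_cons path_edges_rcons IH path_edges_cons setUC.
case: s {IH} => [|b s]; first by rewrite /= setU0.
by rewrite rev_cons link_rcons set2C.
Qed.

Lemma mem_path_edges s (E : {set T}) z : E \in path_edges s -> z \in E -> z \in s.
Proof.
elim: s => [|a s IH]; first by rewrite inE.
rewrite path_edges_cons inE => /orP[]; last first.
  by move=> Es zE; rewrite inE (IH Es zE) orbT.
case: s {IH} => [|b s]; first by rewrite inE.
rewrite /= inE => /eqP-> /set2P[]->.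
  by rewrite mem_head.
by rewrite !inE eqxx orbT.
Qed.

Lemma path_edges_map (f : T -> T) s :
  path_edges (map f s) = [set f @: E | E : {set T} in path_edges s].
Proof.
elim: s => [|a s IH]; first by rewrite /= imset0.
rewrite map_cons path_edges_cons IH path_edges_cons imsetU; congr (_ :|: _).
case: s {IH} => [|b s]; first by rewrite /= imset0.
by rewrite /= imset_set1 imsetU1 imset_set1.
Qed.

Lemma epathP (g : rel T) s : symmetric g -> epath g s <-> edges_in g (path_edges s).
Proof.
move=> gs; case: s => [|a s]; first by split=> // _ u v; rewrite inE.
elim: s a => [|b s IH] a; first by split=> // _ u v; rewrite inE.
rewrite path_edges_cons /=; split.
  case/andP=> gab /IH Es u v; rewrite !inE => /orP[/eqP|]; last exact: Es.
  by case/eq_set2=> -[-> ->] //; rewrite gs.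
move=> Es; rewrite Es ?inE ?eqxx //=.
by apply/IH=> u v uv; apply: Es; rewrite inE uv orbT.
Qed.

Lemma cycle_edgesE s : cycle_edges s = path_edges s :|: link s s.
Proof.
case: s => [|a p]; first by rewrite setU0.
by rewrite /cycle_edges -rcons_cons path_edges_rcons.
Qed.

Lemma cycle_edgesP (g : rel T) s : symmetric g -> cycle g s <-> edges_in g (cycle_edges s).
Proof.
move=> gs; case: s => [|a p]; first by split=> // _ u v; rewrite inE.
exact: (epathP (a :: rcons p a) gs).
Qed.

Lemma cycle_edges_rot s1 s2 : cycle_edges (s1 ++ s2) = cycle_edges (s2 ++ s1).
Proof.
case: s1 => [|a s1]; first by rewrite cats0.
case: s2 => [|b s2]; first by rewrite cats0.
have wrap u p v q :
    link ((u :: p) ++ v :: q) ((u :: p) ++ v :: q) = link (v :: q) (u :: p).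
  by rewrite /= last_cat.
rewrite !cycle_edgesE !path_edges_cat !wrap (setUC (path_edges (b :: s2))) -!setUA.
by rewrite (setUC (link (b :: s2) _)).
Qed.

Lemma cycle_edges_rev s : cycle_edges (rev s) = cycle_edges s.
Proof.
case/lastP: s => [|p a] //; rewrite rev_rcons -cats1 cycle_edges_rot cat1s.
by rewrite /cycle_edges -[in RHS]path_edges_rev rev_cons rev_rcons.
Qed.

Lemma cycle_edges_from s z : z \in s ->
  exists2 t, perm_eq s (z :: t) & cycle_edges s = cycle_edges (z :: t).
Proof.
case/splitPr=> P Q; exists (Q ++ P); first by rewrite perm_catC.
by rewrite cycle_edges_rot.
Qed.

Lemma path_edges_nbr P Q z u : z \notin P -> z \notin Q ->
  [set z; u] \in path_edges (P ++ z :: Q) ->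
  (exists P', P = rcons P' u) \/ (exists Q', Q = u :: Q').
Proof.
move=> zP zQ; rewrite path_edges_cat path_edges_cons !inE -!orbA.
have off s : z \notin s -> [set z; u] \notin path_edges s.
  by move=> zs; apply: contra zs => /mem_path_edges; apply; rewrite set21.
rewrite (negbTE (off _ zP)) (negbTE (off _ zQ)) /=.
case/orP.
  case: Q zQ => [|b Q] zQ; first by rewrite inE.
  rewrite /= inE => /eqP/eq_set2[[_ ->]|[zb _]]; first by right; exists Q.
  by rewrite zb mem_head in zQ.
case/lastP: P zP => [|P a] zP; first by rewrite inE.
rewrite link_rcons inE => /eqP/eq_set2[[za _]|[_ ->]]; last by left; exists P.
by rewrite za mem_rcons mem_head in zP.
Qed.

Lemma path_edges_nbr2 P Q z u1 u2 u : z \notin P -> z \notin Q -> u1 != u2 ->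
  let E := path_edges (P ++ z :: Q) in
  [set z; u1] \in E -> [set z; u2] \in E -> [set z; u] \in E -> u = u1 \/ u = u2.
Proof.
move=> zP zQ u12 E e1 e2 e0.
have slot w : [set z; w] \in E -> w = last z P \/ w = head z Q.
  by case/(path_edges_nbr zP zQ)=> -[s ->]; [left; rewrite last_rcons | right].
move: u12; case: (slot _ e1) (slot _ e2) (slot _ e0) => -> [] -> [] ->;
  by rewrite ?eqxx //; auto.
Qed.

Lemma uniq_mid P Q z : uniq (P ++ z :: Q) -> z \notin P /\ z \notin Q.
Proof.
rewrite cat_uniq => /and3P[_ zP /andP[zQ _]]; split=> //.
by apply: contra zP => zP; apply/hasP; exists z; rewrite ?mem_head.
Qed.

Lemma uniq_block P S Q : uniq (P ++ S ++ Q) ->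
  (forall z, z \in S -> z \notin P) /\ (forall z, z \in S -> z \notin Q).
Proof.
rewrite cat_uniq => /and3P[_ SP]; rewrite cat_uniq => /and3P[_ SQ _].
split=> z zS; first by apply: (hasPn SP); rewrite mem_cat zS.
by apply: contraL zS => zQ; apply: (hasPn SQ).
Qed.

Definition block_edges P S Q := path_edges P :|: path_edges S :|: path_edges Q.

Lemma reverse_block P S Q : S != [::] ->
  (forall z, z \in S -> z \notin P) -> (forall z, z \in S -> z \notin Q) ->
  [/\ path_edges (P ++ S ++ Q) = block_edges P S Q :|: link P S :|: link S Q,
      path_edges (P ++ rev S ++ Q) = block_edges P S Q :|: link P (rev S) :|: link (rev S) Q
    & forall a z, (a \in P) || (a \in Q) -> z \in S -> [set a; z] \notin block_edges P S Q].
Proof.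
move=> S0 SP SQ; have link_catr R : R != [::] -> link P (R ++ Q) = link P R.
  by case: R => [|b R] //; case: P {SP}.
split.
- by rewrite !path_edges_cat link_catr // /block_edges; set_by_cases.
- rewrite !path_edges_cat link_catr ?path_edges_rev; last by rewrite -size_eq0 size_rev size_eq0.
  by rewrite /block_edges; set_by_cases.
move=> a z aPQ zS; rewrite /block_edges !inE; apply/negP=> /orP[/orP[]|] E.
- by move: (SP z zS); rewrite (mem_path_edges E (set22 _ _)).
- have aS := mem_path_edges E (set21 _ _).
  by move: aPQ; rewrite (negbTE (SP a aS)) (negbTE (SQ a aS)).
- by move: (SQ z zS); rewrite (mem_path_edges E (set22 _ _)).
Qed.

Lemma spanning_mem s : size s = #|T| -> uniq s -> forall z, z \in s.
Proof.
move=> sz /card_uniqP; rewrite sz => cs z.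
have /subset_cardP/(_ (subset_predT _)) : #|s| = #|predT : pred T| by rewrite cs.
by move=> /(_ z).
Qed.

Lemma cycle_edges_map (f : T -> T) s :
  cycle_edges (map f s) = [set f @: E | E : {set T} in cycle_edges s].
Proof.
case: s => [|a p]; first by rewrite /= imset0.
by rewrite map_cons /cycle_edges -map_rcons -map_cons path_edges_map.
Qed.

Definition spans (W : seq T -> {set {set T}}) (g : rel T) F :=
  exists s, [/\ size s = #|T|, uniq s, edges_in g (W s) & F = W s].

Lemma ham_pathsP (g : rel T) F : symmetric g ->
  F \in ham_paths g <-> spans (@path_edges T) g F.
Proof.
move=> gs; rewrite inE; split.
  case/existsP=> t /and3P[Ut /(epathP _ gs) Pt /eqP->].
  by exists t; rewrite size_tuple.
case=> s [sz Us /(epathP _ gs) Ps ->]; apply/existsP.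
have sz' : size s == #|T| by rewrite sz.
by exists (Tuple sz'); rewrite /= Us Ps eqxx.
Qed.

Lemma ham_cyclesP (g : rel T) F : symmetric g ->
  F \in ham_cycles g <-> 2 < #|T| /\ spans (@cycle_edges T) g F.
Proof.
move=> gs; rewrite inE; split.
  case/existsP=> t /and4P[T3 Ut /(cycle_edgesP _ gs) Ct /eqP->].
  by split=> //; exists t; rewrite size_tuple.
case=> T3 [s [sz Us /(cycle_edgesP _ gs) Cs ->]]; apply/existsP.
have sz' : size s == #|T| by rewrite sz.
by exists (Tuple sz'); rewrite /= T3 Us Cs eqxx.
Qed.

End EdgeSets.

Lemma card_le_rel (aT rT : finType) (A : {set aT}) (B : {set rT})
    (r : aT -> rT -> Prop) :
  (forall a, a \in A -> exists2 b, b \in B & r a b) ->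
  (forall a1 a2 b, r a1 b -> r a2 b -> a1 = a2) -> #|A| <= #|B|.
Proof.
move=> img inj; case: (pickP (mem A)) => [a0 a0A|A0]; last by rewrite (eq_card0 A0).
have [b0 _ _] := img a0 a0A.
pose spec a b := b \in B /\ r a b.
pose f a := epsilon (inhabits b0) (spec a).
have fP a : a \in A -> spec a (f a).
  by move=> aA; apply: epsilon_spec; have [b] := img a aA; exists b.
rewrite -(card_in_imset (f := f)); last first.
  by move=> a1 a2 /fP[_ r1] /fP[_ r2] f12; apply: (inj _ _ (f a1)); rewrite // f12.
by apply/subset_leq_card/subsetP=> _ /imsetP[a aA ->]; case: (fP a aA).
Qed.

Section Diamond.
Variable T : finType.
Variable e : rel T.
Hypothesis e_sym : symmetric e.
Hypothesis e_irr : irreflexive e.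
Implicit Types (a b c u v w z : T) (F K R J : {set {set T}}).

Lemma mem_diamX a b u : (u \in diamX e a b) = [&& e a u, u != b & ~~ e b u].
Proof. by rewrite /diamX /nbhd !inE negb_or andbC andbA. Qed.

Lemma diamX_l a b : a \notin diamX e a b.
Proof. by rewrite mem_diamX e_irr. Qed.

Lemma diamX_r a b : b \notin diamX e a b.
Proof. by rewrite mem_diamX eqxx andbF. Qed.

Lemma diamX_neql a b u : u \in diamX e a b -> u != a.
Proof. by apply: contraTneq => ->; exact: diamX_l. Qed.

Lemma diamX_neqr a b u : u \in diamX e a b -> u != b.
Proof. by apply: contraTneq => ->; exact: diamX_r. Qed.

Lemma diamX_disjoint a b u : u \in diamX e a b -> u \notin diamX e b a.
Proof. by rewrite !mem_diamX => /and3P[_ _ /negbTE->]. Qed.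

Variables x y : T.
Hypothesis hxy : x != y.

Local Notation X := (diamX e x y).
Local Notation Y := (diamX e y x).
Local Notation e' := (diamond e x y).

Lemma diamond_sym : symmetric e'.
Proof.
move=> u v; rewrite /diamond e_sym.
by case: (e v u); case: (u == x); case: (v == x); case: (u == y); case: (v == y);
  case: (u \in X); case: (v \in X).
Qed.

Lemma diamond_irr : irreflexive e'.
Proof.
move=> u; rewrite /diamond e_irr /=.
by case: eqP => [->|_]; rewrite ?(negbTE (diamX_r x y)).
Qed.

Lemma diamond_edge a b : e' a b -> e a b \/ (a = y /\ b \in X) \/ (b = y /\ a \in X).
Proof.
by rewrite /diamond => /orP[/orP[/andP[? _]|/andP[/eqP-> ?]]|/andP[/eqP-> ?]]; auto.
Qed.

Lemma diamond_x b : e' x b -> b != y -> e x b /\ e y b.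
Proof.
move=> exb' by'; move: exb'; rewrite /diamond eqxx (negbTE hxy) (negbTE by') /= !orbF.
case/andP=> exb; rewrite negb_or => /andP[bX _]; split=> //.
by move: bX; rewrite mem_diamX exb by' /= negbK.
Qed.

Lemma diamond_xX v : v \in X -> ~~ e' x v.
Proof.
move=> vX; apply/negP=> /diamond_x /(_ (diamX_neqr vX))[_ eyv].
by move: vX; rewrite mem_diamX eyv !andbF.
Qed.

Lemma diamond_xY w : w \in Y -> ~~ e' x w.
Proof.
move=> wY; apply/negP=> /diamond_x /(_ (diamX_neql wY))[exw _].
by move: wY; rewrite mem_diamX exw !andbF.
Qed.

Lemma diamond_out a b : a != x -> a != y -> b != x -> b != y -> e' a b = e a b.
Proof.
move=> ax ay bx by'; rewrite /diamond (negbTE ax) (negbTE ay) (negbTE bx) (negbTE by').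
by rewrite /= andbT !orbF.
Qed.

Lemma diamond_y b : b != x -> b != y -> e' y b = e y b || (b \in X).
Proof.
move=> bx by'; rewrite /diamond eq_sym (negbTE hxy) (negbTE bx) (negbTE by') eqxx.
by rewrite /= andbT !orbF.
Qed.

Lemma diamond_xy : e' x y = e x y.
Proof.
rewrite /diamond eqxx (negbTE hxy) eq_sym (negbTE hxy) /=.
by rewrite (negbTE (diamX_r x y)) (negbTE (diamX_l x y)) andbF /= andbT !orbF.
Qed.

Lemma diamond_untouched F : edges_in e' F -> ~~ touches F x X.
Proof. by move=> ok; apply/touchesP=> -[u uX /ok]; apply/negP; apply: diamond_xX. Qed.

Definition swap_xy u := if u == x then y else if u == y then x else u.

Definition swap_edges F : {set {set T}} := [set swap_xy @: E | E : {set T} in F].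

Lemma swap_xyK : involutive swap_xy.
Proof.
move=> u; rewrite /swap_xy; have [->|ux] := eqVneq u x.
  by rewrite eqxx eq_sym (negbTE hxy).
have [->|uy] := eqVneq u y; first by rewrite eqxx.
by rewrite (negbTE ux) (negbTE uy).
Qed.

Lemma swap_xy_inj : injective swap_xy. Proof. exact: inv_inj swap_xyK. Qed.
Lemma swap_xy_x : swap_xy x = y. Proof. by rewrite /swap_xy eqxx. Qed.
Lemma swap_xy_y : swap_xy y = x. Proof. by rewrite /swap_xy eqxx eq_sym (negbTE hxy). Qed.
Lemma swap_xy_id u : u != x -> u != y -> swap_xy u = u.
Proof. by move=> ux uy; rewrite /swap_xy (negbTE ux) (negbTE uy). Qed.

Lemma swap_edges_inj : injective swap_edges.
Proof. exact: imset_inj (imset_inj swap_xy_inj). Qed.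

Lemma mem_swap_edges u v F : ([set u; v] \in swap_edges F) = ([set swap_xy u; swap_xy v] \in F).
Proof.
have -> : [set u; v] = swap_xy @: [set swap_xy u; swap_xy v].
  by rewrite imsetU1 imset_set1 !swap_xyK.
by rewrite mem_imset //; exact: imset_inj swap_xy_inj.
Qed.

(* The edges J (of F) and J' (of K) at the far end of the flipped segment. *)
Definition far_end J J' :=
  (J = set0 /\ J' = set0) \/
  exists c, [/\ e x c, e y c, J = [set [set x; c]] & J' = [set [set y; c]]].

Definition flip_at v R J J' F K :=
  [/\ v \in X, F = R :|: [set [set y; v]] :|: J, K = R :|: [set [set x; v]] :|: J',
      [set y; v] \notin R & far_end J J'].

Definition no_common_y F := forall c, e x c -> e y c -> [set y; c] \notin F.

Definition y_nbrs F v w := [set y; w] \in F /\ forall u, [set y; u] \in F -> u = v \/ u = w.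

Definition flip_data F K :=
  exists v R J J', flip_at v R J J' F K /\ exists2 w, w \in Y & y_nbrs F v w.

(* What is needed to recover F from a flip K. *)
Definition flip_shape F K :=
  [/\ touches K y Y, no_common_y F & exists v R J J', flip_at v R J J' F K].

Definition transformed F K := edges_in e' F /\
  [\/ K = F, [/\ K = swap_edges F, touches K x X & ~~ touches K y Y] | flip_shape F K].

Lemma flip_vertex_unique v1 v2 R1 R2 J1 J2 J1' J2' F1 F2 K :
  edges_in e' F2 -> flip_at v1 R1 J1 J1' F1 K -> flip_at v2 R2 J2 J2' F2 K -> v1 = v2.
Proof.
move=> ok2 [v1X _ K1 _ _] [v2X F2E K2 _ J2c].
have : [set x; v1] \in K by rewrite K1 !inE eqxx orbT.
rewrite K2 !inE => /orP[/orP[xv1R|/eqP/eq_set2]|xv1J].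
- by case/negP: (diamond_untouched ok2); apply/touchesP; exists v1; rewrite // F2E !inE xv1R.
- by case=> [[_ ->]|[xv2 _]] //; move: v2X; rewrite -xv2 (negbTE (diamX_l _ _)).
- case: J2c xv1J => [[_ ->]|[c [exc _ _ ->]]]; rewrite ?inE // => /eqP/eq_set2.
  by case=> -[xy _]; [move: hxy | move: exc]; rewrite xy ?eqxx ?e_irr.
Qed.

Lemma far_end_edge v R J J' K c :
  v \in X -> far_end J J' -> K = R :|: [set [set x; v]] :|: J' ->
  [set y; c] \notin R -> [set y; c] \in K -> J' = [set [set y; c]].
Proof.
move=> vX Jc KE ycR; rewrite KE !inE (negbTE ycR) /= => /orP[/eqP/eq_set2|].
  case=> -[yv _]; first by move: hxy; rewrite yv eqxx.
  by move: vX; rewrite -yv (negbTE (diamX_r _ _)).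
case: Jc => [[_ ->]|[c' [_ eyc' _ ->]]]; rewrite ?inE // => /eqP/eq_set2.
by case=> -[yy cc]; [rewrite cc | move: eyc'; rewrite -yy e_irr].
Qed.

Lemma far_end_unique v R1 R2 J1 J2 J1' J2' F1 F2 K :
  no_common_y F1 -> no_common_y F2 ->
  flip_at v R1 J1 J1' F1 K -> flip_at v R2 J2 J2' F2 K -> J1 = J2 /\ J1' = J2'.
Proof.
move=> nc1 nc2 [vX F1E K1 _ J1c] [_ F2E K2 _ J2c].
have notR (R J : {set {set T}}) Fi c : no_common_y Fi -> Fi = R :|: [set [set y; v]] :|: J ->
    e x c -> e y c -> [set y; c] \notin R.
  by move=> nc FE exc eyc; apply: contra (nc c exc eyc) => ycR; rewrite FE !inE ycR.
have inK (R J' : {set {set T}}) c : K = R :|: [set [set x; v]] :|: J' ->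
    J' = [set [set y; c]] -> [set y; c] \in K.
  by move=> -> ->; rewrite !inE eqxx orbT.
have ne0 c : set0 <> [set [set y; c]] :> {set {set T}}.
  by move/setP=> /(_ [set y; c]); rewrite !inE eqxx.
case: (J1c) => [[-> J10']|[c1 [exc1 eyc1 -> J1E]]];
case: (J2c) => [[-> J20']|[c2 [exc2 eyc2 -> J2E]]].
- by rewrite J10' J20'.
- have := far_end_edge vX J1c K1 (notR _ _ _ _ nc1 F1E exc2 eyc2) (inK _ _ _ K2 J2E).
  by rewrite J10' => /ne0.
- have := far_end_edge vX J2c K2 (notR _ _ _ _ nc2 F2E exc1 eyc1) (inK _ _ _ K1 J1E).
  by rewrite J20' => /ne0.
- have := far_end_edge vX J2c K2 (notR _ _ _ _ nc2 F2E exc1 eyc1) (inK _ _ _ K1 J1E).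
  rewrite J2E => /setP /(_ [set y; c2]); rewrite !inE eqxx => /esym/eqP/eq_set2.
  by case=> -[yy c21]; [rewrite J1E c21 | move: eyc1; rewrite -yy e_irr].
Qed.

Lemma flip_shared_edges v R J J' F K : edges_in e' F -> no_common_y F ->
  flip_at v R J J' F K -> R = K :\: ([set [set x; v]] :|: J').
Proof.
move=> ok nc [vX FE KE _ Jc]; have RF E : E \in R -> E \in F by rewrite FE !inE => ->.
rewrite KE -setUA setDUl setDv setU0; apply/esym/setDidPl.
rewrite disjoint_subset; apply/subsetP=> E /RF EF; rewrite !inE.
apply/negP=> /orP[/eqP EE|EJ].
  by case/negP: (diamond_untouched ok); apply/touchesP; exists v; rewrite -?EE.
case: Jc EJ => [[_ ->]|[c [exc eyc _ ->]]]; rewrite ?inE // => /eqP EE.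
by move: (nc c exc eyc); rewrite -EE EF.
Qed.

Lemma flip_shape_inj F1 F2 K : edges_in e' F1 -> edges_in e' F2 ->
  flip_shape F1 K -> flip_shape F2 K -> F1 = F2.
Proof.
move=> ok1 ok2 [_ nc1 [v1 [R1 [J1 [J1' fl1]]]]] [_ nc2 [v2 [R2 [J2 [J2' fl2]]]]].
have v12 := flip_vertex_unique ok2 fl1 fl2; subst v2.
have [J12 J12'] := far_end_unique nc1 nc2 fl1 fl2.
have R12 : R1 = R2.
  by rewrite (flip_shared_edges ok1 nc1 fl1) (flip_shared_edges ok2 nc2 fl2) J12'.
by case: fl1 fl2 => [_ -> _ _ _] [_ -> _ _ _]; rewrite R12 J12.
Qed.

Lemma flip_touches_x F K : flip_shape F K -> touches K x X.
Proof.
move=> [_ _ [v [R [J [J' [vX _ -> _ _]]]]]].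
by apply/touchesP; exists v; rewrite // !inE eqxx orbT.
Qed.

(* The three classes are told apart by K, so each K comes from at most one F. *)
Lemma transformed_inj F1 F2 K : transformed F1 K -> transformed F2 K -> F1 = F2.
Proof.
have keep_untouched F : edges_in e' F -> K = F -> ~~ touches K x X.
  by move=> ok ->; exact: diamond_untouched.
move=> [ok1 [E1|[E1 t1 n1]|f1]] [ok2 [E2|[E2 t2 n2]|f2]].
- by rewrite -E1 -E2.
- by move: (keep_untouched _ ok1 E1); rewrite t2.
- by move: (keep_untouched _ ok1 E1); rewrite (flip_touches_x f2).
- by move: (keep_untouched _ ok2 E2); rewrite t1.
- by apply: swap_edges_inj; rewrite -E1 -E2.
- by case: f2 => yY _ _; rewrite yY in n1.
- by move: (keep_untouched _ ok2 E2); rewrite (flip_touches_x f1).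
- by case: f1 => yY _ _; rewrite yY in n2.
- exact: flip_shape_inj ok1 ok2 f1 f2.
Qed.

Lemma keep_ok F : edges_in e' F -> ~~ touches F y X -> edges_in e F /\ transformed F F.
Proof.
move=> ok nyX; split; last by split=> //; apply: Or31.
move=> u v uv; case: (diamond_edge (ok _ _ uv)) => [//|[[uy vX]|[vy uX]]].
- by case/negP: nyX; apply/touchesP; exists v; rewrite // -uy.
- by case/negP: nyX; apply/touchesP; exists u; rewrite // -vy set2C.
Qed.

Lemma swap_edge_xy F z b : ~~ touches F y Y -> z = x \/ z = y ->
  [set z; b] \in F -> e' z b -> e (swap_xy z) (swap_xy b).
Proof.
move=> nyY zxy zb ezb.
have [bx|bx] := eqVneq b x.
  subst b; case: zxy => zE; subst z; first by rewrite diamond_irr in ezb.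
  by rewrite swap_xy_x swap_xy_y; move: ezb; rewrite diamond_sym diamond_xy.
have [by'|by'] := eqVneq b y.
  subst b; case: zxy => zE; subst z; last by rewrite diamond_irr in ezb.
  by rewrite swap_xy_x swap_xy_y e_sym -diamond_xy.
rewrite (swap_xy_id bx by'); case: zxy => zE; subst z.
  by rewrite swap_xy_x; case: (diamond_x ezb by').
rewrite swap_xy_y; move: ezb; rewrite diamond_y // => /orP[eyb|]; last first.
  by rewrite mem_diamX => /andP[].
apply: contraNT nyY => exb; apply/touchesP; exists b => //.
by rewrite mem_diamX eyb bx.
Qed.

Lemma swap_edge F a b : edges_in e' F -> ~~ touches F y Y ->
  [set a; b] \in F -> e (swap_xy a) (swap_xy b).
Proof.
move=> ok nyY ab; have eab := ok _ _ ab.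
have [ax|ax] := eqVneq a x; first by apply: (swap_edge_xy nyY) => //; left.
have [ay|ay] := eqVneq a y; first by apply: (swap_edge_xy nyY) => //; right.
have ba : [set b; a] \in F by rewrite set2C.
have [bx|bx] := eqVneq b x.
  by rewrite e_sym; apply: (swap_edge_xy nyY _ ba); [left | rewrite diamond_sym].
have [by'|by'] := eqVneq b y.
  by rewrite e_sym; apply: (swap_edge_xy nyY _ ba); [right | rewrite diamond_sym].
by rewrite (swap_xy_id ax ay) (swap_xy_id bx by') -diamond_out.
Qed.

Lemma swap_ok F : edges_in e' F -> touches F y X -> ~~ touches F y Y ->
  edges_in e (swap_edges F) /\ transformed F (swap_edges F).
Proof.
move=> ok /touchesP[u uX yu] nyY; split.
  move=> a b; rewrite mem_swap_edges => ab.
  by rewrite -(swap_xyK a) -(swap_xyK b); apply: (swap_edge ok nyY).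
split=> //; apply: Or32; split=> //.
  apply/touchesP; exists u; rewrite // mem_swap_edges swap_xy_x.
  by rewrite (swap_xy_id (diamX_neql uX) (diamX_neqr uX)).
apply/touchesP=> -[w wY]; rewrite mem_swap_edges swap_xy_y.
rewrite (swap_xy_id (diamX_neqr wY) (diamX_neql wY)) => /ok.
by apply/negP; apply: diamond_xY.
Qed.

Lemma flip_ok F K : edges_in e' F -> flip_data F K -> edges_in e K /\ transformed F K.
Proof.
move=> ok [v [R [J [J' [[vX FE KE yvR Jc] [w wY [yw nbs]]]]]]].
have RF E : E \in R -> E \in F by rewrite FE !inE => ->.
have nc : no_common_y F.
  move=> c exc eyc; apply/negP=> /nbs[] cE; subst c.
  - by move: vX; rewrite mem_diamX eyc !andbF.
  - by move: wY; rewrite mem_diamX exc !andbF.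
have new_y a b : [set a; b] \in R -> a = y -> b \in X -> False.
  move=> ab ay bX; subst a; case: (nbs b (RF _ ab)) => bE; subst b.
  - by rewrite ab in yvR.
  - by move: (diamX_disjoint bX); rewrite wY.
split.
  move=> a b; rewrite KE !inE => /orP[/orP[ab|/eqP/eq_set2]|abJ].
  - case: (diamond_edge (ok _ _ (RF _ ab))) => [//|[[ay bX]|[by' aX]]].
      by case: (new_y _ _ ab ay bX).
    by rewrite set2C in ab; case: (new_y _ _ ab by' aX).
  - by move: vX; rewrite mem_diamX => /andP[exv _] [[-> ->]|[-> ->]]; rewrite // e_sym.
  - case: Jc abJ => [[_ ->]|[c [_ eyc _ ->]]]; rewrite ?inE // => /eqP/eq_set2.
    by case=> -[-> ->]; rewrite // e_sym.
split=> //; apply: Or33; split=> //; last by exists v, R, J, J'.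
apply/touchesP; exists w => //; move: yw; rewrite FE KE !inE.
case/orP=> [/orP[->//|/eqP/eq_set2]|].
  case=> -[yv wv]; last by move: vX; rewrite -yv (negbTE (diamX_r _ _)).
  by subst w; move: (diamX_disjoint vX); rewrite wY.
case: Jc => [[-> _]|[c [exc eyc -> _]]]; rewrite ?inE // => /eqP/eq_set2.
case=> -[yx _]; first by move: hxy; rewrite yx eqxx.
by move: eyc; rewrite -yx e_irr.
Qed.

(* Flipping the segment S = v ... a between y and x: the edges yv and ax
   become xv and ya, and a is a common neighbour of x and y. *)
Lemma flip_after_y P v S1 Q w :
  let S := v :: S1 in let F := path_edges (rcons P y ++ S ++ x :: Q) in
  (forall z, z \in S -> z \notin rcons P y) -> (forall z, z \in S -> z \notin x :: Q) ->
  edges_in e' F -> v \in X -> w \in Y -> y_nbrs F v w ->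
  flip_data F (path_edges (rcons P y ++ rev S ++ x :: Q)).
Proof.
move=> S F SP SQ ok vX wY nbs.
have [FE KE notR] := reverse_block (isT : S != [::]) SP SQ.
set a := last v S1; have Sa : S = rcons (belast v S1) a by rewrite /S lastI.
have j1 : link (rcons P y) S = [set [set y; v]] by rewrite link_rcons.
have j2 : link S (x :: Q) = [set [set x; a]] by rewrite Sa link_rcons set2C.
have j3 : link (rcons P y) (rev S) = [set [set y; a]] by rewrite Sa rev_rcons link_rcons.
have j4 : link (rev S) (x :: Q) = [set [set x; v]] by rewrite rev_cons link_rcons set2C.
have yP : y \in rcons P y by rewrite mem_rcons mem_head.
have aP : a \notin rcons P y by apply: SP; rewrite Sa mem_rcons mem_head.
have ay : a != y by apply: contraNneq aP => ->.
have [exa eya] : e x a /\ e y a.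
  by apply: diamond_x ay; apply: ok; rewrite /F FE j2 !inE eqxx orbT.
exists v, (block_edges (rcons P y) S (x :: Q)), [set [set x; a]], [set [set y; a]].
split; last by exists w.
split=> //; first by rewrite /F FE j1 j2.
- by rewrite KE j3 j4 setUAC.
- by apply: notR; rewrite ?yP // mem_head.
- by right; exists a.
Qed.

(* Flipping the segment S = y ... x that follows v: the edges vy and xc become
   vx and yc, where c, if it exists, is the vertex following x. *)
Lemma flip_through_xy P v S1 Q w :
  let S := y :: rcons S1 x in let F := path_edges (rcons P v ++ S ++ Q) in
  (forall z, z \in S -> z \notin rcons P v) -> (forall z, z \in S -> z \notin Q) ->
  edges_in e' F -> v \in X -> w \in Y -> y_nbrs F v w ->
  flip_data F (path_edges (rcons P v ++ rev S ++ Q)).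
Proof.
move=> S F SP SQ ok vX wY nbs.
have [FE KE notR] := reverse_block (isT : S != [::]) SP SQ.
have Sr : rev S = rcons (x :: rev S1) y by rewrite /S rev_cons rev_rcons.
have j1 : link (rcons P v) S = [set [set y; v]] by rewrite link_rcons set2C.
have j3 : link (rcons P v) (rev S) = [set [set x; v]].
  by rewrite Sr rcons_cons link_rcons set2C.
have okJ u : [set x; u] \in link S Q -> e' x u.
  by move=> xu; apply: ok; rewrite /F FE inE xu orbT.
have Qy u : u \in Q -> u != y.
  by move=> uQ; apply: contraTneq uQ => ->; apply: SQ; rewrite mem_head.
have far : far_end (link S Q) (link (rev S) Q).
  case: Q {SQ F ok nbs FE KE notR} okJ Qy => [|c Q] okJ Qy; first by left; rewrite Sr.
  have j2 : link S (c :: Q) = [set [set x; c]].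
    by rewrite -[S]/(rcons (y :: S1) x) link_rcons.
  have [exc eyc] : e x c /\ e y c.
    by apply: diamond_x (Qy c (mem_head _ _)); apply: okJ; rewrite j2 set11.
  by right; exists c; rewrite Sr link_rcons.
exists v, (block_edges (rcons P v) S Q), (link S Q), (link (rev S) Q).
split; last by exists w.
split=> //; [by rewrite /F FE j1 | by rewrite KE j3 |].
by rewrite set2C; apply: notR; rewrite ?mem_head // mem_rcons mem_head.
Qed.

Lemma flip_path_ordered A B C : let s := A ++ y :: B ++ x :: C in
  uniq s -> edges_in e' (path_edges s) ->
  touches (path_edges s) y X -> touches (path_edges s) y Y ->
  exists2 s', perm_eq s s' & flip_data (path_edges s) (path_edges s').
Proof.
move=> s U ok /touchesP[v vX yv] /touchesP[w wY yw].
have [yA yD] := uniq_mid U.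
have vw : v != w by apply: contraTneq wY => <-; exact: diamX_disjoint.
have nbs : y_nbrs (path_edges s) v w by split=> // u; apply: path_edges_nbr2.
have vx := diamX_neql vX.
case: (path_edges_nbr yA yD yv) => [[A1 Av]|[D1 vD]].
  have sE : s = rcons A1 v ++ (y :: rcons B x) ++ C.
    by rewrite /s Av cat_cons (cat_rcons _ B).
  have U' : uniq (rcons A1 v ++ (y :: rcons B x) ++ C) by rewrite -sE.
  have [SP SQ] := uniq_block U'.
  exists (rcons A1 v ++ rev (y :: rcons B x) ++ C).
    by rewrite sE perm_cat2l perm_cat2r perm_sym perm_rev.
  by rewrite sE in ok nbs *; exact: flip_through_xy SP SQ ok vX wY nbs.
have [B1 BE] : exists B1, B = v :: B1.
  case: B {s U ok yv yw yD nbs} vD => [[xv _]|b B1 [bv _]]; last first.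
    by exists B1; rewrite bv.
  by rewrite xv eqxx in vx.
have sE : s = rcons A y ++ (v :: B1) ++ x :: C by rewrite /s BE cat_rcons.
have U' : uniq (rcons A y ++ (v :: B1) ++ x :: C) by rewrite -sE.
have [SP SQ] := uniq_block U'.
exists (rcons A y ++ rev (v :: B1) ++ x :: C).
  by rewrite sE perm_cat2l perm_cat2r perm_sym perm_rev.
by rewrite sE in ok nbs *; exact: flip_after_y SP SQ ok vX wY nbs.
Qed.

Lemma flip_path s : uniq s -> x \in s -> y \in s -> edges_in e' (path_edges s) ->
  touches (path_edges s) y X -> touches (path_edges s) y Y ->
  exists2 s', perm_eq s s' & flip_data (path_edges s) (path_edges s').
Proof.
move=> U xs ys; case/splitPr: ys U xs => A D U.
rewrite mem_cat inE (negbTE hxy) /= => /orP[xA|xD]; last first.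
  by case/splitPr: xD U => B C U; exact: flip_path_ordered.
(* x precedes y: read the path backwards *)
have [B [C rA]] : exists B C, rev A = B ++ x :: C.
  have : x \in rev A by rewrite mem_rev.
  by case/splitPr=> B C; exists B, C.
have sr : rev (A ++ y :: D) = rev D ++ y :: B ++ x :: C.
  by rewrite rev_cat rev_cons cat_rcons rA.
rewrite -path_edges_rev sr => ok hX hY.
have U' : uniq (rev D ++ y :: B ++ x :: C) by rewrite -sr rev_uniq.
have [s' ps' fl] := flip_path_ordered U' ok hX hY.
by exists s'; rewrite // -(perm_rev (A ++ y :: D)) sr.
Qed.

Lemma flip_cycle_after_y C v B1 : let s := x :: C ++ y :: v :: B1 in
  uniq s -> edges_in e' (cycle_edges s) -> v \in X -> touches (cycle_edges s) y Y ->
  exists2 s', perm_eq s s' & flip_data (cycle_edges s) (cycle_edges s').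
Proof.
move=> s U ok vX /touchesP[w wY yw].
have asPath t :
    cycle_edges (x :: C ++ y :: t) = path_edges (rcons (x :: C) y ++ t ++ [:: x]).
  by rewrite /cycle_edges rcons_cat rcons_cons cat_rcons cats1.
have [yC yB] := uniq_mid (U : uniq ((x :: C) ++ y :: v :: B1)).
have yB' : y \notin rcons (v :: B1) x by rewrite mem_rcons inE eq_sym (negbTE hxy).
have pathE : cycle_edges s = path_edges ((x :: C) ++ y :: rcons (v :: B1) x).
  by rewrite /s /cycle_edges rcons_cat.
have yv : [set y; v] \in cycle_edges s.
  by rewrite pathE path_edges_cat path_edges_cons !inE eqxx !orbT.
have vw : v != w by apply: contraTneq wY => <-; exact: diamX_disjoint.
have nbs : y_nbrs (cycle_edges s) v w.
  by split=> // u; rewrite pathE in yv yw *; apply: path_edges_nbr2.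
have U' : uniq (rcons (x :: C) y ++ (v :: B1) ++ [::]) by rewrite cats0 cat_rcons.
have [SP _] := uniq_block U'.
have SQ z : z \in v :: B1 -> z \notin [:: x].
  by move=> /SP; apply: contra; rewrite inE => /eqP->; rewrite mem_rcons !inE eqxx orbT.
exists (x :: C ++ y :: rev (v :: B1)).
  by rewrite /s -!cat_cons perm_cat2l perm_cons perm_sym perm_rev.
by rewrite /s !asPath in ok nbs *; exact: flip_after_y SP SQ ok vX wY nbs.
Qed.

Lemma flip_cycle s : uniq s -> x \in s -> y \in s -> edges_in e' (cycle_edges s) ->
  touches (cycle_edges s) y X -> touches (cycle_edges s) y Y ->
  exists2 s', perm_eq s s' & flip_data (cycle_edges s) (cycle_edges s').
Proof.
move=> U xs ys ok hX hY; have [t pst tE] := cycle_edges_from xs.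
have yt : y \in t by move: ys; rewrite (perm_mem pst) inE eq_sym (negbTE hxy).
case/splitPr: yt pst tE => C B pst tE.
suff [s' ps' fl] : exists2 s', perm_eq (x :: C ++ y :: B) s' &
    flip_data (cycle_edges (x :: C ++ y :: B)) (cycle_edges s').
  by exists s'; [exact: perm_trans pst ps' | rewrite tE].
rewrite tE in ok hX hY; have {}U : uniq (x :: C ++ y :: B) by rewrite -(perm_uniq pst).
have [yC yB] := uniq_mid (U : uniq ((x :: C) ++ y :: B)).
have yB' : y \notin rcons B x by rewrite mem_rcons inE eq_sym (negbTE hxy).
have pathE : cycle_edges (x :: C ++ y :: B) = path_edges ((x :: C) ++ y :: rcons B x).
  by rewrite /cycle_edges rcons_cat.
case/touchesP: (hX) => v vX yv; have vx := diamX_neql vX; rewrite pathE in yv.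
case/(path_edges_nbr yC yB'): yv => [[C' Cv]|[B' Bv]]; last first.
  have [B1 BE] : exists B1, B = v :: B1.
    case: B {U yB yB' ok hX hY pathE pst tE} Bv => [[xv _]|b B1 [bv _]]; last first.
      by exists B1; rewrite bv.
    by rewrite xv eqxx in vx.
  by subst B; exact: flip_cycle_after_y.
(* v precedes y: read the cycle backwards *)
case: C' Cv => [[xv _]|c C0 [_ CE]]; first by rewrite xv eqxx in vx.
subst C; set s2 := x :: rev B ++ y :: v :: rev C0.
have revE : cycle_edges s2 = cycle_edges (x :: rcons C0 v ++ y :: B).
  rewrite -[RHS]cycle_edges_rev rev_cons rev_cat rev_cons rev_rcons cat_rcons.
  by rewrite -cats1 cycle_edges_rot.
have ps2 : perm_eq (x :: rcons C0 v ++ y :: B) s2.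
  rewrite -(perm_rev (x :: _)) rev_cons rev_cat rev_cons rev_rcons cat_rcons.
  by rewrite perm_rcons.
have [s' ps' fl] : exists2 s', perm_eq s2 s' & flip_data (cycle_edges s2) (cycle_edges s').
  by apply: flip_cycle_after_y; rewrite ?revE // -(perm_uniq ps2).
by exists s'; [exact: perm_trans ps2 ps' | rewrite -revE].
Qed.

Definition flippable (W : seq T -> {set {set T}}) :=
  forall s, uniq s -> x \in s -> y \in s -> edges_in e' (W s) ->
    touches (W s) y X -> touches (W s) y Y ->
    exists2 s', perm_eq s s' & flip_data (W s) (W s').

Lemma transform_spanning (W : seq T -> {set {set T}}) :
  (forall s, W (map swap_xy s) = swap_edges (W s)) -> flippable W ->
  forall F, spans W e' F -> exists2 K, spans W e K & transformed F K.
Proof.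
move=> Wswap Wflip _ [s [sz U ok ->]].
have [xs ys] := (spanning_mem sz U x, spanning_mem sz U y).
have [hX|nyX] := boolP (touches (W s) y X); last first.
  by have [okK tK] := keep_ok ok nyX; exists (W s) => //; exists s.
have [hY|nyY] := boolP (touches (W s) y Y).
  have [s' ps fl] := Wflip s U xs ys ok hX hY; have [okK tK] := flip_ok ok fl.
  by exists (W s') => //; exists s'; rewrite -(perm_size ps) -(perm_uniq ps).
have [okK tK] := swap_ok ok hX nyY; exists (swap_edges (W s)) => //.
by exists (map swap_xy s); rewrite size_map (map_inj_uniq swap_xy_inj) Wswap.
Qed.

Lemma card_transform (W : seq T -> {set {set T}}) (A B : {set {set {set T}}}) :
  (forall s, W (map swap_xy s) = swap_edges (W s)) -> flippable W ->
  (forall F, F \in A -> spans W e' F) ->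
  (forall F K, F \in A -> spans W e K -> K \in B) -> #|A| <= #|B|.
Proof.
move=> Wswap Wflip AW WB; apply: (card_le_rel (r := transformed)); last first.
  exact: transformed_inj.
move=> F FA; have [K KW FK] := transform_spanning Wswap Wflip (AW F FA).
by exists K; first exact: WB FA KW.
Qed.

End Diamond.

Theorem mainTheorem9 (T : finType) (e : rel T)
  (e_sym : symmetric e) (e_irr : irreflexive e) (x y : T) (hxy : x != y) :
  h0 (diamond e x y) <= h0 e /\ h1 (diamond e x y) <= h1 e.
Proof.
have e'_sym := diamond_sym e_sym x y.
split.
  apply: (card_transform e_sym e_irr hxy (W := @cycle_edges T)).
  - by move=> s; rewrite cycle_edges_map.
  - exact: flip_cycle.
  - by move=> F /(ham_cyclesP _ e'_sym)[].
  - by move=> F K /(ham_cyclesP _ e'_sym)[T3 _] KW; apply/(ham_cyclesP _ e_sym).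
apply: (card_transform e_sym e_irr hxy (W := @path_edges T)).
- by move=> s; rewrite path_edges_map.
- exact: flip_path.
- by move=> F /(ham_pathsP _ e'_sym).
- by move=> F K _ KW; apply/(ham_pathsP _ e_sym).
Qed.
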